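(* Consider the multi-hop control network closed loop of the context with plant, graphs, scheduling, integers $n,r,m,s$, step amplitude $A$ and bounds $\bar O_y,\bar O_u\ge 0$ fixed. Restricted to parameter choices $(\mathbf c,\mathbf d,\mathbf w_R,\mathbf w_O)$ satisfying the deadbeat identity $D_CD_{P'}+N_{C'}N_{G_R}N_PN_{G_O}=z^{l}$ with $l=m+r+1$, each of the constraints $O_y\le\bar O_y$ and $O_u\le\bar O_u$ is equivalent to a finite system of polynomial inequalities in the entries of $\mathbf d$ and $\mathbf w_R$ (with coefficients depending only on the fixed data).
   Context: Plant: $P(z)=\dfrac{N_P(z)}{M(z)D_{P'}(z)}$ with $N_P(z)=b_{n-1}z^{n-1}+\dots+b_0$, $D_{P'}(z)=z^r+a_{r-1}z^{r-1}+\dots+a_0$, $M(z)$ a monic polynomial, $r+\deg M=n$. Controllability network: acyclic directed graph $(V_R,E_R)$ with controller node $v_c$ and actuator node $v_u$, weights $W_R:E_R\to\mathbb R$, and a fixed scheduling assigning to each directed path $\rho$ from $v_c$ to $v_u$ a delay $d(\rho)\in\mathbb N$; $\chi_R(d)$ is the set of paths of delay $d$, $D_R$ the finite set of occurring delays, $\bar D_R=\max D_R$, $W_R(\rho)$ the product of the weights on $\rho$, $\gamma_R(d)=\sum_{\rho\in\chi_R(d)}W_R(\rho)$, $N_{G_R}(z)=\sum_{d\in D_R}\gamma_R(d)z^{\bar D_R-d}$, $G_R(z)=N_{G_R}(z)/z^{\bar D_R}$. Observability network analogously (weights $W_O$, delays $D_O$, $\bar D_O=\max D_O$, $\gamma_O$,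 $N_{G_O}(z)=\sum_{d\in D_O}\gamma_O(d)z^{\bar D_O-d}$, $G_O(z)=N_{G_O}(z)/z^{\bar D_O}$). Controller $C(z)=M(z)z^{\bar D_R}z^{\bar D_O}\,N_{C'}(z)/D_C(z)$ with $N_{C'}(z)=d_sz^s+\dots+d_0$, $D_C(z)=(z-1)(z^m+c_{m-1}z^{m-1}+\dots+c_0)$, $m+1=s+\deg M+\bar D_R+\bar D_O$; $\mathbf c=(c_{m-1},\dots,c_0)$, $\mathbf d=(d_s,\dots,d_0)$, $\mathbf w_R=(W_R(e))_{e\in E_R}$, $\mathbf w_O=(W_O(e))_{e\in E_O}$. With step reference $r(k)=A$, $k\ge0$ ($R(z)=Az/(z-1)$), the plant output and plant input have Z-transforms $Y(z)=\frac{CG_RP}{1+CG_RPG_O}R(z)$ and $U(z)=\frac{CG_R}{1+CG_RPG_O}R(z)$; the error is $e(k)=y(k)-r(k)$. Overshoots: $O_y=\sup_{k\ge0}|e(k)|$ and $O_u=\sup_{k\ge0}|u(k)|$. *)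

From HB Require Import structures.
From mathcomp Require Import all_boot all_order all_algebra fraction.
From mathcomp Require Import all_classical all_reals all_analysis.
From mathcomp Require mpoly.

Set Implicit Arguments.
Unset Strict Implicit.
Unset Printing Implicit Defensive.

Import Order.TTheory GRing.Theory Num.Theory.
Local Open Scope ring_scope.

Definition simple_digraph (V E : finType) (src tgt : E -> V) : Prop :=
  injective (fun e => (src e, tgt e)).

Definition is_dpath (V E : finType) (src tgt : E -> V) (u v : V)
    (p : seq E) : bool :=
  if p is e :: p' then
    [&& src e == u, path (fun e1 e2 => tgt e1 == src e2) e p'
      & tgt (last e p') == v]
  else u == v.

Definition acyclic (V E : finType) (src tgt : E -> V) : Prop :=
  forall (x : V) (p : seq E), p != [::] -> ~~ is_dpath src tgt x x p.

Fixpoint all_seqs (E : finType) (k : nat) : seq (seq E) :=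
  if k is k'.+1 then [::] :: [seq e :: q | e <- enum E, q <- all_seqs E k']
  else [:: [::]].

(* the directed paths from u to v; in an acyclic graph every such path
   uses pairwise distinct edges, hence has length <= #|E|, so this list
   enumerates all of them. *)
Definition dpaths (V E : finType) (src tgt : E -> V) (u v : V) : seq (seq E) :=
  [seq p <- all_seqs E #|E| | is_dpath src tgt u v p].

Section Network.
Variables (R : numFieldType) (V E : finType) (src tgt : E -> V) (u v : V).
Variables (delay : seq E -> nat) (w : E -> R).

Definition path_weight (p : seq E) : R := \prod_(e <- p) w e.

Definition delays : seq nat := undup [seq delay p | p <- dpaths src tgt u v].

Definition max_delay : nat := \max_(d <- delays) d.

Definition gamma (d : nat) : R :=
  \sum_(p <- dpaths src tgt u v | delay p == d) path_weight p.

Definition NG : {poly R} :=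
  \sum_(d <- delays) gamma d *: 'X^(max_delay - d).
End Network.

Definition frac (R : idomainType) (p : R) : {fraction R} := FracField.tofrac p.

(* [ztrans_is y F] : the Z-transform  Y(z) = sum_{k>=0} y(k) z^(-k)  of
   y equals the rational function F = p/q, read as an identity of formal
   Laurent series in z^(-1):  q(z) * Y(z) = p(z), i.e. for every integer
   exponent t, the coefficient of z^t agrees on both sides. *)
Definition ztrans_is (R : fieldType) (y : nat -> R) (F : {fraction {poly R}}) :=
  exists p q : {poly R},
    [/\ q != 0, F = frac p / frac q,
       (forall t : nat, \sum_(t <= i < size q) q`_i * y (i - t)%N = p`_t)
     & (forall j : nat, \sum_(i < size q) q`_i * y (i + j.+1)%N = 0)].

Definition overshoot (R : realType) (x : nat -> R) : \bar R :=
  ereal_sup (range (fun k => (`|x k|)%:E)).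

Section Loop.
Variables (R : fieldType) (m s : nat).

Definition NC' (d : 'I_s.+1 -> R) : {poly R} := \sum_(i < s.+1) d i *: 'X^i.

Definition DC (c : 'I_m -> R) : {poly R} :=
  ('X - 1) * ('X^m + \sum_(i < m) c i *: 'X^i).

Variables (NP DP M NGR NGO : {poly R}) (DR DO : nat) (A : R).
Variables (c : 'I_m -> R) (d : 'I_s.+1 -> R).

Definition Cz : {fraction {poly R}} :=
  frac (M * 'X^DR * 'X^DO * NC' d) / frac (DC c).
Definition GRz : {fraction {poly R}} := frac NGR / frac 'X^DR.
Definition GOz : {fraction {poly R}} := frac NGO / frac 'X^DO.
Definition Pz : {fraction {poly R}} := frac NP / frac (M * DP).
Definition Rz : {fraction {poly R}} := frac (A *: 'X) / frac ('X - 1).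

Definition Yz : {fraction {poly R}} :=
  Cz * GRz * Pz / (1 + Cz * GRz * Pz * GOz) * Rz.
Definition Uz : {fraction {poly R}} :=
  Cz * GRz / (1 + Cz * GRz * Pz * GOz) * Rz.
End Loop.

Definition deadbeat (R : fieldType) (m s l : nat) (DP NP NGR NGO : {poly R})
    (c : 'I_m -> R) (d : 'I_s.+1 -> R) : Prop :=
  DC c * DP + NC' d * NGR * NP * NGO = 'X^l.

(* the variable vector (d, w_R) used to evaluate multivariate polynomials:
   variables 0..s are d_0..d_s, variables s+1.. are the edge weights of E_R
   (in the enumeration order of the finite type of edges) *)
Definition dw_vars (R : Type) (s : nat) (E : finType) (d : 'I_s.+1 -> R)
    (w : E -> R) : 'I_(s.+1 + #|E|) -> R :=
  fun i => match fintype.split i with inl j => d j | inr k => w (enum_val k) end.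

From Pilot Require Import Defs.
From HB Require Import structures.
From mathcomp Require Import all_boot all_order all_algebra fraction.
From mathcomp Require Import all_classical all_reals all_analysis.
From mathcomp Require mpoly.
From mathcomp Require Import zify ring lra.

(* Under the deadbeat identity the return difference 1 + C G_R P G_O equals
   z^l / (D_C D_P'), so c and w_O drop out and Y(z), U(z) are numerators
   over z^l (z - 1) whose coefficients are polynomials in (d, w_R).  Inverting
   the Z-transform, y(k) and u(k) are partial sums of those coefficients,
   constant from k = l + 1 on; so sup_k |e(k)| <= O amounts to the finitely
   many polynomial inequalities O - e(k) >= 0, O + e(k) >= 0 for k <= l + 1. *)

Set Implicit Arguments.
Unset Strict Implicit.
Unset Printing Implicit Defensive.

Import Order.TTheory GRing.Theory Num.Theory.
Import (canonicals) mpoly.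
Local Open Scope ring_scope.

Section ZTransform.
Variable R : fieldType.
Implicit Types (p q : {poly R}) (y : nat -> R).

Lemma sum_nat_ord_extend (f : nat -> R) a b N :
  (forall i, (b <= i)%N -> f i = 0) -> (b <= N)%N ->
  \sum_(a <= i < b) f i = \sum_(i < N) (if (a <= i)%N then f i else 0).
Proof.
move=> f0 bN; rewrite -(big_mkord xpredT (fun i => if (a <= i)%N then f i else 0)).
case: (leqP a b) => ab; last first.
  rewrite [LHS]big_geq ?(ltnW ab) //; symmetry.
  by apply: big1_seq => i _; case: leqP => // ai; apply: f0; lia.
rewrite [RHS](big_cat_nat (n := a)) ?leq0n ?(leq_trans ab bN) //=.
rewrite [X in _ = X + _]big1_seq ?add0r; last first.
  move=> i /andP[_]; rewrite mem_index_iota => /andP[_ ia].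
  by case: leqP ia => //; lia.
rewrite [RHS](big_cat_nat (n := b)) //= [X in _ + X]big1_seq ?addr0; last first.
  move=> i /andP[_]; rewrite mem_index_iota => /andP[bi _].
  by rewrite (leq_trans ab bi) f0.
by apply: eq_big_seq => i; rewrite mem_index_iota => /andP[-> _].
Qed.

(* z^k times the truncation y(0) + ... + y(k) z^-k of the series of y. *)
Definition ztrans_head y k : {poly R} := \poly_(j < k.+1) y (k - j)%N.

Lemma ztrans_head_rem y p q k : q != 0 ->
  (forall t, \sum_(t <= i < size q) q`_i * y (i - t)%N = p`_t) ->
  (forall j, \sum_(i < size q) q`_i * y (i + j.+1)%N = 0) ->
  (size ('X^k * p - q * ztrans_head y k)%R < size q)%N.
Proof.
move=> q0 yp y0.
have sq : (0 < size q)%N by rewrite size_poly_gt0.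
suff : (size ('X^k * p - q * ztrans_head y k)%R <= (size q).-1)%N by case: (size q) sq.
apply/leq_sizeP => t tq.
have qz i : (size q <= i)%N -> q`_i = 0 by apply: nth_default.
rewrite coefB coefXnM coefM.
case: (ltnP t k) => tk.
  rewrite sub0r; apply/eqP; rewrite oppr_eq0; apply/eqP.
  rewrite -[RHS](y0 (k - t - 1)%N).
  rewrite -(big_mkord xpredT (fun i => q`_i * y (i + (k - t - 1).+1)%N)).
  rewrite (@sum_nat_ord_extend _ _ _ t.+1) ?leq0n => [|i ti|]; last 2 first.
  - by rewrite qz ?mul0r //; lia.
  - lia.
  apply: eq_bigr => j _; have jt := ltn_ord j.
  by rewrite coef_poly ifT /=; [congr (_ * y _) | ]; lia.
rewrite -(yp (t - k)%N) (@sum_nat_ord_extend _ _ _ t.+1) => [|i ti|]; last 2 first.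
- by rewrite qz ?mul0r //; lia.
- lia.
rewrite -sumrB; apply: big1 => j _; rewrite coef_poly; have jt := ltn_ord j.
case: (leqP (t - k) j) => h.
  by rewrite ifT; [apply/eqP; rewrite subr_eq0; apply/eqP; congr (_ * y _) | ]; lia.
by rewrite ifF ?mulr0 ?subr0 //; lia.
Qed.

Lemma ztrans_is_coef y F P Q k : Q != 0 -> F = Defs.frac P / Defs.frac Q ->
  ztrans_is y F -> y k = (('X^k * P) %/ Q)`_0.
Proof.
move=> Q0 -> [p [q [q0 e yp y0]]].
have -> : y k = (('X^k * p) %/ q)`_0.
  have -> : 'X^k * p = ztrans_head y k * q + ('X^k * p - q * ztrans_head y k).
    by rewrite [ztrans_head y k * q]mulrC addrC subrK.
  by rewrite divp_addl_mul_small ?ztrans_head_rem // coef_poly subn0.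
have fq : Defs.frac q != 0 by rewrite tofrac_eq0.
have fQ : Defs.frac Q != 0 by rewrite tofrac_eq0.
have /eqP : Defs.frac (p * Q) = Defs.frac (P * q).
  by rewrite /Defs.frac !tofracM -(divfK fq (tofrac p)) -(divfK fQ (tofrac P)) -e mulrAC.
rewrite tofrac_eq => /eqP pQ.
rewrite -(divp_pmul2l ('X^k * p) Q0 q0) [Q * q]mulrC.
by rewrite mulrCA [Q * p]mulrC pQ [P * q]mulrC mulrCA divp_pmul2l.
Qed.

Lemma coef0_divp_Xn_step l j :
  (('X^j : {poly R}) %/ ('X^l * ('X - 1)))`_0 = if (l < j)%N then 1 else 0.
Proof.
have X1 : ('X - 1 : {poly R}) \is monic by rewrite -polyC1 monicXsubC.
have sQ : size ('X^l * ('X - 1) : {poly R}) = l.+2.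
  by rewrite size_Mmonic ?monic_neq0 ?monicXn // size_polyXn -polyC1 size_XsubC addn2.
case: (ltnP l j) => lj; last by rewrite divp_small ?coef0 // size_polyXn sQ; lia.
set S := \sum_(i < j - l) ('X : {poly R}) ^+ i.
have -> : ('X^j : {poly R}) = S * ('X^l * ('X - 1)) + 'X^l.
  by rewrite mulrCA [S * _]mulrC -subrX1 mulrBr mulr1 -exprD subnKC ?subrK // ltnW.
rewrite divp_addl_mul_small; last by rewrite sQ size_polyXn.
rewrite /S coef_sum; case e: (j - l)%N => [|i]; first lia.
by rewrite big_ord_recl /= expr0 coefC /= big1 ?addr0 // => i' _; rewrite coefXn.
Qed.

(* The sequence with Z-transform p(z) / (z^l (z - 1)): a superposition of steps
   starting at the times l + 1 - i, hence constant from time l + 1 on. *)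
Lemma ztrans_step_response y l N (a : nat -> R) :
  ztrans_is y (Defs.frac (\poly_(i < N) a i) / Defs.frac ('X^l * ('X - 1))) ->
  forall k, y k = \sum_(i < N) (if (l < k + i)%N then a i else 0).
Proof.
have Q0 : ('X^l * ('X - 1) : {poly R}) != 0.
  by rewrite mulf_neq0 ?monic_neq0 ?monicXn // -polyC1 monicXsubC.
move=> yF k; rewrite (ztrans_is_coef k Q0 erefl yF) poly_def mulr_sumr.
rewrite (big_morph (fun p => p %/ _) (fun p q => divpD _ p q) (div0p _)) coef_sum.
apply: eq_bigr => i _.
rewrite -scalerAr -exprD divpZl coefZ coef0_divp_Xn_step.
by case: ifP; rewrite ?mulr1 ?mulr0.
Qed.

End ZTransform.

(* The controller M z^DR z^DO N_C'/D_C cancels the delays of both networks and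
   the factor M of the plant, so the deadbeat identity turns the return
   difference 1 + C G_R P G_O into z^l / (D_C D_P'). *)
Lemma deadbeat_closed_loop (F : fieldType) (mM xR xO nc dc g np dp go xl x x1 a : F) :
  mM != 0 -> xR != 0 -> xO != 0 -> dc != 0 -> dp != 0 -> x1 != 0 -> xl != 0 ->
  xl = dc * dp + nc * g * np * go ->
  let C := mM * xR * xO * nc / dc in let GR := g / xR in
  let P := np / (mM * dp) in let GO := go / xO in
  C * GR * P / (1 + C * GR * P * GO) * (a * x / x1)
     = a * (xO * x) * nc * g * np / (xl * x1)
  /\ C * GR / (1 + C * GR * P * GO) * (a * x / x1)
     = a * (xO * x) * mM * nc * g * dp / (xl * x1).
Proof.
move=> mM0 xR0 xO0 dc0 dp0 x10 xl0 db C GR P GO.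
have -> : 1 + C * GR * P * GO = xl / (dc * dp).
  by rewrite /C /GR /P /GO db; field; rewrite ?mM0 ?xR0 ?xO0 ?dc0 ?dp0.
by rewrite /C /GR /P; split; field; rewrite ?mM0 ?xR0 ?xO0 ?dc0 ?dp0 ?x10 ?xl0.
Qed.

Section ClosedLoop.
Variables (R : fieldType) (m s l DR DO : nat) (NP DP M NGR NGO : {poly R}) (A : R).
Variables (c : 'I_m -> R) (d : 'I_s.+1 -> R).
Hypotheses (DP0 : DP != 0) (M0 : M != 0) (db : deadbeat l DP NP NGR NGO c d).

Lemma DC_neq0 : DC c != 0.
Proof.
apply: mulf_neq0; first by rewrite monic_neq0 // -polyC1 monicXsubC.
rewrite -size_poly_eq0 size_polyDl ?size_polyXn // ltnS.
apply/leq_sizeP => j jm; rewrite coef_sum big1 // => i _.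
by rewrite coefZ coefXn; case: eqP => [ji|]; rewrite ?mulr0 //; have := ltn_ord i; lia.
Qed.

Let tofrac_neq0 (p : {poly R}) : p != 0 -> Defs.frac p != 0.
Proof. by rewrite tofrac_eq0. Qed.

Let closed_loop (dc : {poly R}) (dc0 : dc != 0) :=
  @deadbeat_closed_loop _ (Defs.frac M) (Defs.frac 'X^DR) (Defs.frac 'X^DO)
    (Defs.frac (NC' d)) (Defs.frac dc) (Defs.frac NGR) (Defs.frac NP)
    (Defs.frac DP) (Defs.frac NGO) (Defs.frac 'X^l) (Defs.frac 'X)
    (Defs.frac ('X - 1)) (Defs.frac A%:P)
    (tofrac_neq0 M0) (tofrac_neq0 (monic_neq0 (monicXn _ _)))
    (tofrac_neq0 (monic_neq0 (monicXn _ _))) (tofrac_neq0 dc0) (tofrac_neq0 DP0)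
    (tofrac_neq0 (monic_neq0 (monicXsubC 1))) (tofrac_neq0 (monic_neq0 (monicXn _ _))).

Let frac_deadbeat : Defs.frac 'X^l =
  Defs.frac (DC c) * Defs.frac DP
  + Defs.frac (NC' d) * Defs.frac NGR * Defs.frac NP * Defs.frac NGO.
Proof. by rewrite -db /Defs.frac rmorphD !rmorphM. Qed.

Lemma Yz_deadbeat :
  Yz NP DP M NGR NGO DR DO A c d =
  Defs.frac (A *: 'X^(DO.+1) * NC' d * NGR * NP) / Defs.frac ('X^l * ('X - 1)).
Proof.
rewrite /Yz /Cz /GRz /Pz /GOz /Rz; move: DC_neq0 frac_deadbeat.
move: (DC c) => dc dc0 db'; rewrite -!mul_polyC exprSr /Defs.frac !tofracM.
exact: (closed_loop dc0 db').1.
Qed.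

Lemma Uz_deadbeat :
  Uz NP DP M NGR NGO DR DO A c d =
  Defs.frac (A *: 'X^(DO.+1) * M * NC' d * NGR * DP) / Defs.frac ('X^l * ('X - 1)).
Proof.
rewrite /Uz /Cz /GRz /Pz /GOz /Rz; move: DC_neq0 frac_deadbeat.
move: (DC c) => dc dc0 db'; rewrite -!mul_polyC exprSr /Defs.frac !tofracM.
exact: (closed_loop dc0 db').2.
Qed.
End ClosedLoop.

Section Overshoot.
Variables (R : realType) (x : nat -> R) (B : R).

Lemma overshoot_leP : (overshoot x <= B%:E)%E <-> forall k, `|x k| <= B.
Proof.
split=> [xB k|xB]; last by apply: ge_ereal_sup => _ [k _ <-]; rewrite lee_fin.
by rewrite -lee_fin; apply: le_trans xB; apply: ereal_sup_ubound; exists k.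
Qed.

Lemma overshoot_le_eventually_const L : (forall k, (L <= k)%N -> x k = x L) ->
  (overshoot x <= B%:E)%E <-> forall k, (k <= L)%N -> `|x k| <= B.
Proof.
move=> xL; rewrite overshoot_leP; split=> [xB k _ | xB k]; first exact: xB.
by case: (leqP k L) => [|/ltnW Lk]; [exact: xB | rewrite xL // xB].
Qed.

End Overshoot.

Section StepResponseSystem.
Variables (R : realType) (K l : nat).
Local Notation mpoly := (mpoly.mpoly K R).
Implicit Types (Z : {poly mpoly}) (v : 'I_K -> R) (y : nat -> R).

Definition step_value Z k : mpoly :=
  \sum_(i < size Z) (if (l < k + i)%N then Z`_i else 0).

Lemma step_valueE Z v y :
  ztrans_is y (Defs.frac (map_poly (mpoly.meval v) Z) / Defs.frac ('X^l * ('X - 1))) ->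
  forall k, y k = mpoly.meval v (step_value Z k).
Proof.
move=> yZ k; rewrite (ztrans_step_response yZ k) rmorph_sum.
by apply: eq_bigr => i _; case: ifP; rewrite ?rmorph0.
Qed.

Lemma step_value_const Z k : (l < k)%N -> step_value Z k = step_value Z l.+1.
Proof. by move=> lk; apply: eq_bigr => i _; rewrite !ifT //; lia. Qed.

Definition overshoot_system Z (a B : R) : seq mpoly :=
  [seq mpoly.mpolyC K (B + a) - step_value Z k | k <- iota 0 l.+2] ++
  [seq mpoly.mpolyC K (B - a) + step_value Z k | k <- iota 0 l.+2].

Lemma overshoot_systemP Z a B v y :
  ztrans_is y (Defs.frac (map_poly (mpoly.meval v) Z) / Defs.frac ('X^l * ('X - 1))) ->
  (overshoot (fun k => (y k - a)%R) <= B%:E)%E <->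
  all (fun p => 0 <= mpoly.meval v p) (overshoot_system Z a B).
Proof.
move=> yZ; have yE := step_valueE yZ.
rewrite (@overshoot_le_eventually_const _ _ _ l.+1) => [|k lk]; last first.
  by rewrite !yE step_value_const.
rewrite all_cat !all_map; split=> [yB | /andP[/allP yB1 /allP yB2] k kl].
  apply/andP; split; apply/allP => k /[!mem_iota] /andP[_ kl] /=;
    rewrite !(mpoly.mevalD, mpoly.mevalN) mpoly.mevalC -yE;
    have := yB k ltac:(lia); rewrite ler_norml => /andP[? ?]; lra.
have kin : k \in iota 0 l.+2 by rewrite mem_iota; lia.
have := yB1 k kin; have := yB2 k kin.
rewrite /= !(mpoly.mevalD, mpoly.mevalN) !mpoly.mevalC -yE ler_norml => h1 h2.
by apply/andP; split; lra.
Qed.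

End StepResponseSystem.

(* [NG] over an arbitrary commutative ring, so that the weights can be
   polynomial indeterminates. *)
Definition network_poly (R : comNzRingType) (V E : finType) (src tgt : E -> V)
    (u v : V) (delay : seq E -> nat) (w : E -> R) : {poly R} :=
  \sum_(dd <- delays src tgt u v delay)
     (\sum_(p <- dpaths src tgt u v | delay p == dd) \prod_(e <- p) w e)
       *: 'X^(max_delay src tgt u v delay - dd).

Lemma NG_network_poly (R : numFieldType) (V E : finType) (src tgt : E -> V)
    (u v : V) (delay : seq E -> nat) (w : E -> R) :
  NG src tgt u v delay w = network_poly src tgt u v delay w.
Proof. by []. Qed.

Lemma map_network_poly (R S : comNzRingType) (f : {rmorphism R -> S})
    (V E : finType) (src tgt : E -> V) (u v : V) (delay : seq E -> nat) (w : E -> R) :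
  map_poly f (network_poly src tgt u v delay w)
  = network_poly src tgt u v delay (fun e => f (w e)).
Proof.
rewrite rmorph_sum; apply: eq_bigr => dd _.
rewrite /= map_polyZ map_polyXn !rmorph_sum; congr (_ *: _).
by apply: eq_bigr => p _; rewrite rmorph_prod.
Qed.

Section SymbolicParameters.
Variables (R : realType) (s : nat) (E : finType).
Local Notation K := (s.+1 + #|E|)%N.
Local Notation mpoly := (mpoly.mpoly K R).
Implicit Types (d : 'I_s.+1 -> R) (w : E -> R).

Definition dw_X (i : 'I_K) : mpoly := mpoly.mpolyX R (mpoly.mnm1 i).

Definition NC'_sym : {poly mpoly} := \sum_(i < s.+1) dw_X (lshift #|E| i) *: 'X^i.

Definition weight_sym (e : E) : mpoly := dw_X (rshift s.+1 (enum_rank e)).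

Definition polyC_sym (p : {poly R}) : {poly mpoly} := map_poly (@mpoly.mpolyC K R) p.

Lemma dw_vars_lshift d w i : dw_vars d w (lshift #|E| i) = d i.
Proof. by rewrite /dw_vars (unsplitK (inl _ i)). Qed.

Lemma dw_vars_rshift d w e : dw_vars d w (rshift s.+1 (enum_rank e)) = w e.
Proof. by rewrite /dw_vars (unsplitK (inr _ (enum_rank e))) enum_rankK. Qed.

Lemma map_NC'_sym d w : map_poly (mpoly.meval (dw_vars d w)) NC'_sym = NC' d.
Proof.
rewrite rmorph_sum; apply: eq_bigr => i _; rewrite /= map_polyZ map_polyXn.
by congr (_ *: _); rewrite -(dw_vars_lshift d w i); apply: mpoly.mevalXU.
Qed.

Lemma map_network_poly_sym (V : finType) (src tgt : E -> V) (u v : V)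
    (delay : seq E -> nat) d w :
  map_poly (mpoly.meval (dw_vars d w)) (network_poly src tgt u v delay weight_sym)
  = NG src tgt u v delay w.
Proof.
rewrite map_network_poly NG_network_poly; congr network_poly; apply: funext => e.
by rewrite -(dw_vars_rshift d w e); apply: mpoly.mevalXU.
Qed.

Lemma map_polyC_sym (x : 'I_K -> R) p : map_poly (mpoly.meval x) (polyC_sym p) = p.
Proof. by apply/polyP => i; rewrite !coef_map /= mpoly.mevalC. Qed.

End SymbolicParameters.

Theorem proposition3 (R : realType) (n r m s : nat)
    (NP DP M : {poly R})
    (VR ER : finType) (srcR tgtR : ER -> VR) (vc vu : VR) (dlyR : seq ER -> nat)
    (VO EO : finType) (srcO tgtO : EO -> VO) (vy vcO : VO) (dlyO : seq EO -> nat)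
    (A Oy_bar Ou_bar : R) :
  (size NP <= n)%N -> DP \is monic -> size DP = r.+1 -> M \is monic ->
  (r + (size M).-1 = n)%N ->
  simple_digraph srcR tgtR -> acyclic srcR tgtR ->
  simple_digraph srcO tgtO -> acyclic srcO tgtO ->
  (m.+1 = s + (size M).-1 + max_delay srcR tgtR vc vu dlyR
                          + max_delay srcO tgtO vy vcO dlyO)%N ->
  0 <= Oy_bar -> 0 <= Ou_bar ->
  let DR := max_delay srcR tgtR vc vu dlyR in
  let DO := max_delay srcO tgtO vy vcO dlyO in
  let l := (m + r + 1)%N in
  (exists ps : seq (mpoly.mpoly (s.+1 + #|ER|) R),
     forall (c : 'I_m -> R) (d : 'I_s.+1 -> R) (wR : ER -> R) (wO : EO -> R),
       let NGR := NG srcR tgtR vc vu dlyR wR in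
       let NGO := NG srcO tgtO vy vcO dlyO wO in
       deadbeat l DP NP NGR NGO c d ->
       forall y : nat -> R, ztrans_is y (Yz NP DP M NGR NGO DR DO A c d) ->
       ((overshoot (fun k => (y k - A)%R) <= Oy_bar%:E)%E <->
        (all (fun p => 0 <= mpoly.meval (dw_vars d wR) p) ps)))
  /\
  (exists ps : seq (mpoly.mpoly (s.+1 + #|ER|) R),
     forall (c : 'I_m -> R) (d : 'I_s.+1 -> R) (wR : ER -> R) (wO : EO -> R),
       let NGR := NG srcR tgtR vc vu dlyR wR in
       let NGO := NG srcO tgtO vy vcO dlyO wO in
       deadbeat l DP NP NGR NGO c d ->
       forall u : nat -> R, ztrans_is u (Uz NP DP M NGR NGO DR DO A c d) ->
       ((overshoot u <= Ou_bar%:E)%E <->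
        (all (fun p => 0 <= mpoly.meval (dw_vars d wR) p) ps))).
Proof.
move=> _ /monic_neq0 DP0 _ /monic_neq0 M0 _ _ _ _ _ _ _ _ DR DO l.
pose NGR_sym := network_poly srcR tgtR vc vu dlyR (@weight_sym R s ER).
pose delayed_step := @polyC_sym R s ER (A *: 'X^(DO.+1)).
pose Y_sym := delayed_step * @NC'_sym R s ER * NGR_sym * @polyC_sym R s ER NP.
pose U_sym := delayed_step * @polyC_sym R s ER M * @NC'_sym R s ER * NGR_sym
                * @polyC_sym R s ER DP.
split.
  exists (overshoot_system l Y_sym A Oy_bar) => c d wR wO NGR NGO db y.
  rewrite (Yz_deadbeat (l := l)) // => yY.
  apply: overshoot_systemP; rewrite /Y_sym !rmorphM /=.
  by rewrite map_NC'_sym map_network_poly_sym !map_polyC_sym.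
exists (overshoot_system l U_sym 0 Ou_bar) => c d wR wO NGR NGO db u.
rewrite (Uz_deadbeat (l := l)) // => uU.
have -> : u = (fun k => u k - 0) by apply: funext => k; rewrite subr0.
apply: overshoot_systemP; rewrite /U_sym !rmorphM /=.
by rewrite map_NC'_sym map_network_poly_sym !map_polyC_sym.
Qed.
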